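(* Let $E$ be a closed formula in which all bound variables are pairwise distinct, let $S$ be the (finite) set of pieces of $E$, and let $d$ be the maximum depth of nested variables in $E$. Let $T$ be the finite set of LJB-sequents whose formulas all belong to $S$, whose bracket subscripts are all of the form $V(x)$ for some variable $x$ of $E$, and whose depth is at most $d$. Then only LJB-sequents of $T$ can occur in a derivation of $\vdash E$ in LJB.
   Context: Formulas: $A ::= P(t_1,\dots,t_n)\mid A\rightarrow A\mid\forall x\,A$, with first-order terms. A formula is a tree with nodes labelled by atomic formulas, $\rightarrow$, or $\forall x$; the pieces of $E$ are the formulas associated to the positions of this tree (the subtrees, without any substitution of variables). In $E$ each bound variable $x$ labels a unique position $\forall x$; $V(x)$ is the set of variables bound in the piece $\forall x\,A$ at that position. The maximum depth of nested variables is the maximal number of nodes labelled by a quantifier $\forall$ along a single root-to-leaf path of $E$. LJB: an LJB-context is a finite multiset of items; an item is a formula or $[\Gamma]_V$ ($V$ a finite set of variables bound by the bracket, $\Gamma$ an LJB-context); $FV([\Gamma]_V)=FV(\Gamma)\setminus V$. Depth: $depth(A)=0$ for a formula, $depth([\Gamma]_V)=1+depth(\Gamma)$, $depth(\{I_1,\dots,I_n\})=\max_i depth(I_i)$; the depth of an LJB-sequent is that of its context. Cleaning rules (anywhere in a context): $[I,\Gamma]_V\longrightarrow I,[\Gamma]_V$ if $FV(I)\cap V=\emptyset$; $[\ ]_V\longrightarrow\emptyset$; $I\,I\longrightarrow I$; $\Gamma{\downarrow}$ is the normal form for a fixed strategy. LJB rules apply only to LJB-sequents with normal context in which, in each formula,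 bound variables are distinct and distinct from free variables; formulas are not identified modulo $\alpha$. Rules: (L$\rightarrow$) from $\Gamma'\vdash A_1,\dots,\Gamma'\vdash A_n$ infer $\Gamma\vdash P$, where $\Gamma=\Gamma_1,[\Gamma_2,[\dots\Gamma_{i-1},[\Gamma_i, A_1\rightarrow\dots\rightarrow A_n\rightarrow P]_{V_{i-1}}\dots]_{V_2}]_{V_1}$ ($i\ge1$), $\Gamma'=([\dots[[\Gamma_1]_{V_1},\Gamma_2]_{V_2},\dots,\Gamma_{i-1}]_{V_{i-1}},\Gamma_i,A_1\rightarrow\dots\rightarrow A_n\rightarrow P){\downarrow}$, $P$ atomic with no free variable in $V_1\cup\dots\cup V_{i-1}$; (R$\forall$) from $[\Gamma]_V{\downarrow}\vdash A$ infer $\Gamma\vdash\forall x\,A$, $V$ the set of all variables bound in $\forall x\,A$; (R$\rightarrow$) from $(\Gamma,A){\downarrow}\vdash B$ infer $\Gamma\vdash A\rightarrow B$. *)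

From Stdlib Require Import List Arith.
Import ListNotations.

Definition var := nat.

Inductive term : Type :=
| TVar : var -> term
| TFun : nat -> list term -> term.

Inductive formula : Type :=
| Atom : nat -> list term -> formula
| Imp : formula -> formula -> formula
| All : var -> formula -> formula.

Fixpoint tfv (t : term) : list var :=
  match t with
  | TVar x => [x]
  | TFun _ ts => (fix go (ts : list term) : list var :=
                    match ts with [] => [] | u :: us => tfv u ++ go us end) ts
  end.

Fixpoint fv (A : formula) : list var :=
  match A with
  | Atom _ ts => flat_map tfv ts
  | Imp B C => fv B ++ fv C
  | All x B => filter (fun y => negb (Nat.eqb y x)) (fv B)
  end.

Fixpoint bv (A : formula) : list var :=
  match A with
  | Atom _ _ => []
  | Imp B C => bv B ++ bv C
  | All x B => x :: bv B
  end.

Fixpoint pieces (A : formula) : list formula :=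
  A :: match A with
       | Atom _ _ => []
       | Imp B C => pieces B ++ pieces C
       | All _ B => pieces B
       end.

Fixpoint qdepth (A : formula) : nat :=
  match A with
  | Atom _ _ => 0
  | Imp B C => Nat.max (qdepth B) (qdepth C)
  | All _ B => S (qdepth B)
  end.

Definition closed (A : formula) : Prop := fv A = [].

(* V(x): the set of variables bound in the piece  forall x A  of E *)
Definition set_eq (V W : list var) : Prop := forall x, In x V <-> In x W.

Definition is_Vx (E : formula) (V : list var) : Prop :=
  exists x B, In (All x B) (pieces E) /\ set_eq V (bv (All x B)).

(* LJB contexts: finite multisets of items, represented by lists taken
   up to (recursive) permutation; bracket subscripts are finite sets of
   variables, represented by lists taken up to set equality.            *)
Inductive item : Type :=
| IF : formula -> item
| IB : list var -> list item -> item.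

Definition ctx := list item.

Inductive iequiv : item -> item -> Prop :=
| ie_form A : iequiv (IF A) (IF A)
| ie_br V W G H : set_eq V W -> cequiv G H -> iequiv (IB V G) (IB W H)
with cequiv : ctx -> ctx -> Prop :=
| ce_nil : cequiv [] []
| ce_cons I J G H : iequiv I J -> cequiv G H -> cequiv (I :: G) (J :: H)
| ce_swap I J G : cequiv (I :: J :: G) (J :: I :: G)
| ce_trans G H K : cequiv G H -> cequiv H K -> cequiv G K.

Fixpoint ifv (I : item) (x : var) : Prop :=
  match I with
  | IF A => In x (fv A)
  | IB V G => (fix go (G : ctx) : Prop :=
                 match G with [] => False | J :: G' => ifv J x \/ go G' end) G
              /\ ~ In x V
  end.

Fixpoint idepth (I : item) : nat :=
  match I with
  | IF _ => 0
  | IB _ G => S ((fix go (G : ctx) : nat :=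
                    match G with [] => 0 | J :: G' => Nat.max (idepth J) (go G') end) G)
  end.

Definition cdepth (G : ctx) : nat := fold_right (fun I n => Nat.max (idepth I) n) 0 G.

Fixpoint iforms (I : item) : list formula :=
  match I with
  | IF A => [A]
  | IB _ G => flat_map iforms G
  end.
Definition cforms (G : ctx) : list formula := flat_map iforms G.

Fixpoint isubs (I : item) : list (list var) :=
  match I with
  | IF _ => []
  | IB V G => V :: flat_map isubs G
  end.
Definition csubs (G : ctx) : list (list var) := flat_map isubs G.

Inductive clean_step : ctx -> ctx -> Prop :=
| cs_lift G1 G2 V H1 I H2 :
    (forall x, ifv I x -> ~ In x V) ->
    clean_step (G1 ++ IB V (H1 ++ I :: H2) :: G2) (G1 ++ I :: IB V (H1 ++ H2) :: G2)
| cs_empty G1 G2 V : clean_step (G1 ++ IB V [] :: G2) (G1 ++ G2)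
| cs_dup G1 G2 G3 I J :
    iequiv I J -> clean_step (G1 ++ I :: G2 ++ J :: G3) (G1 ++ I :: G2 ++ G3)
| cs_in G1 G2 V H H' :
    clean_step H H' -> clean_step (G1 ++ IB V H :: G2) (G1 ++ IB V H' :: G2).

Definition normal (G : ctx) : Prop := forall G', ~ clean_step G G'.

Inductive clean_star : ctx -> ctx -> Prop :=
| cst_refl G : clean_star G G
| cst_eq G H K : cequiv G H -> clean_star H K -> clean_star G K
| cst_step G H K : clean_step G H -> clean_star H K -> clean_star G K.

(* G |-> G↓ : the normal form computed by a fixed cleaning strategy *)
Definition strategy (nf : ctx -> ctx) : Prop :=
  forall G, clean_star G (nf G) /\ normal (nf G).

Definition sequent : Type := (ctx * formula)%type.

Definition wf_formula (A : formula) : Prop :=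
  NoDup (bv A) /\ (forall x, In x (bv A) -> ~ In x (fv A)).

Definition applicable (G : ctx) : Prop :=
  normal G /\ Forall wf_formula (cforms G).

(* Gamma_1,[Gamma_2,[ ... Gamma_{i-1},[inner]_{V_{i-1}} ... ]_{V_2}]_{V_1} *)
Fixpoint nest (layers : list (ctx * list var)) (inner : ctx) : ctx :=
  match layers with
  | [] => inner
  | (G, V) :: ls => G ++ [IB V (nest ls inner)]
  end.

(* [ ... [[Gamma_1]_{V_1}, Gamma_2]_{V_2}, ..., Gamma_{i-1}]_{V_{i-1}} *)
Definition unnest (layers : list (ctx * list var)) : ctx :=
  fold_left (fun acc '(G, V) => [IB V (acc ++ G)]) layers [].

Definition imps (As : list formula) (P : formula) : formula := fold_right Imp P As.

Inductive rule_inst (nf : ctx -> ctx) : list sequent -> sequent -> Prop :=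
| r_Limp (G : ctx) (layers : list (ctx * list var)) (Gi : ctx)
         (As : list formula) (p : nat) (ts : list term) (prems : list sequent) :
    applicable G ->
    cequiv G (nest layers (Gi ++ [IF (imps As (Atom p ts))])) ->
    (forall x, In x (fv (Atom p ts)) -> forall GV, In GV layers -> ~ In x (snd GV)) ->
    Forall2 (fun s A => cequiv (fst s)
                (nf (unnest layers ++ Gi ++ [IF (imps As (Atom p ts))])) /\ snd s = A)
            prems As ->
    rule_inst nf prems (G, Atom p ts)
| r_Rall (G : ctx) (x : var) (A : formula) (G' : ctx) :
    applicable G ->
    cequiv G' (nf [IB (bv (All x A)) G]) ->
    rule_inst nf [(G', A)] (G, All x A)
| r_Rimp (G : ctx) (A B : formula) (G' : ctx) :
    applicable G ->
    cequiv G' (nf (G ++ [IF A])) ->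
    rule_inst nf [(G', B)] (G, Imp A B).

Inductive tree : Type := Node : sequent -> list tree -> tree.

Definition root (t : tree) : sequent := match t with Node s _ => s end.

Inductive subtree : tree -> tree -> Prop :=
| sub_refl t : subtree t t
| sub_child u s ch c : In c ch -> subtree u c -> subtree u (Node s ch).

Definition valid (nf : ctx -> ctx) (t : tree) : Prop :=
  forall s ch, subtree (Node s ch) t -> rule_inst nf (map root ch) s.

Definition occurs (s : sequent) (t : tree) : Prop :=
  exists ch, subtree (Node s ch) t.

Definition inT (E : formula) (s : sequent) : Prop :=
  (forall A, In A (cforms (fst s)) \/ A = snd s -> In A (pieces E)) /\
  (forall V, In V (csubs (fst s)) -> is_Vx E V) /\
  cdepth (fst s) <= qdepth E.

From Stdlib Require Import List Arith Lia Classical.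
Import ListNotations.

(* Every sequent of a derivation of |- E inherits two properties from the root.
   Its formulas are pieces of E and its bracket subscripts are sets V(x): the
   rules only introduce subformulas of the conclusion and brackets V(x) for a
   quantifier forall x A of E, while cleaning and multiset equality create
   nothing new.  Its depth is at most that of E: the context is normal, so an
   item inside [H]_V(x) has a free variable in V(x) (otherwise it could be
   lifted out); as E is closed with distinct bound variables, the item therefore
   lives inside the body of the unique quantifier forall x of E, and brackets
   nest no deeper than quantifiers. *)

Lemma pieces_refl A : In A (pieces A).
Proof. destruct A; now left. Qed.

Lemma pieces_trans A B C : In A (pieces B) -> In B (pieces C) -> In A (pieces C).
Proof.
  induction C as [p ts|C1 IH1 C2 IH2|y C IH]; simpl; intros HAB [<-|HBC]; auto;
    try contradiction.
  right; apply in_app_iff; apply in_app_iff in HBC as [HBC|HBC]; auto.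
Qed.

Lemma pieces_All_body x B : In B (pieces (All x B)).
Proof. right; apply pieces_refl. Qed.

Lemma pieces_Imp_l A B : In A (pieces (Imp A B)).
Proof. right; apply in_app_iff; left; apply pieces_refl. Qed.

Lemma pieces_Imp_r A B : In B (pieces (Imp A B)).
Proof. right; apply in_app_iff; right; apply pieces_refl. Qed.

Lemma pieces_imps A As P : In A As -> In A (pieces (imps As P)).
Proof.
  induction As as [|B As IH]; intros HA; [destruct HA|destruct HA as [<-|HA]].
  - apply pieces_Imp_l.
  - eapply pieces_trans; [apply IH, HA|apply pieces_Imp_r].
Qed.

Lemma qdepth_pieces A C : In A (pieces C) -> qdepth A <= qdepth C.
Proof.
  induction C as [p ts|C1 IH1 C2 IH2|y C IH]; simpl; intros [<-|HA]; simpl;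
    try solve [lia|contradiction].
  - apply in_app_iff in HA as [HA|HA]; [apply IH1 in HA|apply IH2 in HA]; lia.
  - apply IH in HA; lia.
Qed.

Lemma bv_of_pieces_All C x B : In (All x B) (pieces C) -> In x (bv C).
Proof.
  induction C as [p ts|C1 IH1 C2 IH2|y C IH]; simpl; intros [HC|HC]; try discriminate.
  - contradiction.
  - apply in_app_iff; apply in_app_iff in HC as [HC|HC]; auto.
  - injection HC as -> ->; now left.
  - right; auto.
Qed.

Lemma pieces_All_of_bv C x : In x (bv C) -> exists B, In (All x B) (pieces C).
Proof.
  induction C as [p ts|C1 IH1 C2 IH2|y C IH]; simpl; intros Hx; try contradiction.
  - apply in_app_iff in Hx as [Hx|Hx];
      [destruct (IH1 Hx) as [B HB]|destruct (IH2 Hx) as [B HB]];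
      exists B; right; apply in_app_iff; auto.
  - destruct Hx as [<-|Hx]; [exists C; now left|].
    destruct (IH Hx) as [B HB]; exists B; now right.
Qed.

Lemma NoDup_app_disjoint {A} (l1 l2 : list A) a :
  NoDup (l1 ++ l2) -> In a l1 -> In a l2 -> False.
Proof.
  intros Hnd H1 H2; apply in_split in H2 as (l3 & l4 & ->).
  rewrite app_assoc in Hnd; apply NoDup_remove_2 in Hnd.
  apply Hnd, in_app_iff; left; apply in_app_iff; auto.
Qed.

Lemma pieces_All_unique C x B1 B2 : NoDup (bv C) ->
  In (All x B1) (pieces C) -> In (All x B2) (pieces C) -> B1 = B2.
Proof.
  induction C as [p ts|C1 IH1 C2 IH2|y C IH]; simpl; intros Hnd [H1|H1] [H2|H2];
    try discriminate; try contradiction.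
  - apply in_app_iff in H1 as [H1|H1]; apply in_app_iff in H2 as [H2|H2].
    + eapply IH1; eauto using NoDup_app_remove_r.
    + exfalso; eauto using NoDup_app_disjoint, bv_of_pieces_All.
    + exfalso; eauto using NoDup_app_disjoint, bv_of_pieces_All.
    + eapply IH2; eauto using NoDup_app_remove_l.
  - congruence.
  - injection H1 as -> ->; apply NoDup_cons_iff in Hnd as [Hy _].
    exfalso; eauto using bv_of_pieces_All.
  - injection H2 as -> ->; apply NoDup_cons_iff in Hnd as [Hy _].
    exfalso; eauto using bv_of_pieces_All.
  - apply NoDup_cons_iff in Hnd as [_ Hnd]; eauto.
Qed.

Lemma fv_pieces C B v : In B (pieces C) -> In v (fv B) ->
  In v (fv C) \/ exists Bv, In (All v Bv) (pieces C) /\ In B (pieces Bv).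
Proof.
  induction C as [p ts|C1 IH1 C2 IH2|y C IH]; simpl; intros [<-|HB] Hv; auto.
  - contradiction.
  - rewrite in_app_iff; apply in_app_iff in HB as [HB|HB];
      [destruct (IH1 HB Hv) as [Hfv|(Bv & HBv & HB')]
      |destruct (IH2 HB Hv) as [Hfv|(Bv & HBv & HB')]]; auto;
      right; exists Bv; rewrite in_app_iff; auto.
  - destruct (IH HB Hv) as [Hfv|(Bv & HBv & HB')].
    + destruct (Nat.eq_dec v y) as [->|Hne]; [right; exists C; auto|].
      left; apply filter_In; split; auto.
      now apply Bool.negb_true_iff, Nat.eqb_neq.
    + right; exists Bv; auto.
Qed.

Lemma fv_pieces_unbound C B v :
  In B (pieces C) -> In v (fv B) -> ~ In v (bv C) -> In v (fv C).
Proof.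
  intros HB Hv Hnb; destruct (fv_pieces C B v HB Hv) as [Hfv|(Bv & HBv & _)]; auto.
  exfalso; eauto using bv_of_pieces_All.
Qed.

Lemma pieces_under_All x B y D C :
  In C (pieces D) -> In (All y D) (pieces (All x B)) -> In C (pieces B).
Proof.
  intros HC [Heq|HD].
  - injection Heq as -> ->; exact HC.
  - eapply pieces_trans; [exact HC|].
    eapply pieces_trans; [apply pieces_All_body|exact HD].
Qed.

(* In a closed formula every free variable of a piece is bound above it, and
   distinct bound variables make that binder the unique one for its variable. *)
Lemma pieces_below_binder E x B F v : closed E -> NoDup (bv E) ->
  In (All x B) (pieces E) -> In F (pieces E) ->
  In v (fv F) -> In v (bv (All x B)) -> In F (pieces B).
Proof.
  intros E_closed E_bv_NoDup HxB HF Hv Hbv.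
  destruct (fv_pieces E F v HF Hv) as [HvE|(Bv & HBv & HFBv)].
  - rewrite E_closed in HvE; contradiction.
  - destruct (pieces_All_of_bv _ _ Hbv) as [B' HB'].
    assert (Bv = B') as <-.
    { eapply pieces_All_unique; eauto using pieces_trans. }
    eapply pieces_under_All; eauto.
Qed.

Fixpoint item_ind_in (P : item -> Prop) (hF : forall A, P (IF A))
  (hB : forall V G, (forall I, In I G -> P I) -> P (IB V G)) (I : item) : P I :=
  match I with
  | IF A => hF A
  | IB V G => hB V G
      ((fix go (G : list item) : forall J, In J G -> P J :=
          match G with
          | [] => fun J (h : In J []) => False_ind _ h
          | K :: G' => fun J h =>
              match h with
              | or_introl e => eq_ind K P (item_ind_in P hF hB K) J e
              | or_intror h' => go G' J h'
              end
          end) G)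
  end.

Lemma ifv_IB_inv V G v : ifv (IB V G) v -> (exists I, In I G /\ ifv I v) /\ ~ In v V.
Proof.
  intros [HG HV]; split; auto; clear HV.
  induction G as [|I G IH]; [contradiction|].
  destruct HG as [HI|HG]; [exists I; now split; [left|]|].
  destruct (IH HG) as (J & HJ & Hv); exists J; split; [right|]; auto.
Qed.

Lemma ifv_iforms I v : ifv I v -> exists B, In B (iforms I) /\ In v (fv B).
Proof.
  induction I as [A|V G IH] using item_ind_in; intros Hv.
  - exists A; split; [now left|exact Hv].
  - apply ifv_IB_inv in Hv as [(J & HJ & Hv) _].
    destruct (IH J HJ Hv) as (B & HB & HvB).
    exists B; split; [apply in_flat_map; eauto|exact HvB].
Qed.

Lemma idepth_IB V G : idepth (IB V G) = S (cdepth G).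
Proof. induction G; reflexivity. Qed.

Lemma cdepth_le G n : (forall I, In I G -> idepth I <= n) -> cdepth G <= n.
Proof.
  induction G as [|I G IH]; simpl; intros H; [lia|].
  specialize (H I (or_introl eq_refl)) as HI.
  specialize (IH (fun J HJ => H J (or_intror HJ))); lia.
Qed.

Lemma normal_IB G V H : normal G -> In (IB V H) G ->
  normal H /\ (forall I, In I H -> exists v, ifv I v /\ In v V).
Proof.
  intros Hn Hin; apply in_split in Hin as (G1 & G2 & ->); split.
  - intros H' Hst; exact (Hn _ (cs_in G1 G2 V H H' Hst)).
  - intros I HI; apply in_split in HI as (H1 & H2 & ->).
    apply NNPP; intros Hnone.
    apply (Hn (G1 ++ I :: IB V (H1 ++ H2) :: G2)), cs_lift.
    intros x Hx HxV; apply Hnone; eauto.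
Qed.

Lemma is_Vx_set_eq E V W : set_eq V W -> is_Vx E V -> is_Vx E W.
Proof.
  intros HVW (x & B & HB & HV); exists x, B; split; auto.
  intro y; rewrite <- (HVW y); apply HV.
Qed.

Lemma Forall2_Forall {X Y} (R : X -> Y -> Prop) (P : X -> Prop) (Q : Y -> Prop) xs ys :
  (forall x y, R x y -> Q y -> P x) -> Forall2 R xs ys -> Forall Q ys -> Forall P xs.
Proof.
  intros HRQ; induction 1; intros HQ; constructor;
    apply Forall_cons_iff in HQ as [HQy HQ]; eauto.
Qed.

Section FromPieces.
Variable E : formula.

Definition item_from_pieces (I : item) : Prop :=
  Forall (fun A => In A (pieces E)) (iforms I) /\ Forall (is_Vx E) (isubs I).

Definition from_pieces (G : ctx) : Prop := Forall item_from_pieces G.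

Lemma item_from_pieces_IF A : item_from_pieces (IF A) <-> In A (pieces E).
Proof.
  unfold item_from_pieces; simpl; rewrite Forall_cons_iff; intuition constructor.
Qed.

Lemma item_from_pieces_IB V G : item_from_pieces (IB V G) <-> is_Vx E V /\ from_pieces G.
Proof.
  unfold item_from_pieces, from_pieces; simpl.
  rewrite Forall_cons_iff, !Forall_flat_map; split.
  - intros [Hf [HV Hs]]; split; auto; now apply Forall_and.
  - intros [HV HG]; apply Forall_and_inv in HG; tauto.
Qed.

Lemma from_pieces_in G I : from_pieces G -> In I G -> item_from_pieces I.
Proof. intros HG HI; exact (proj1 (Forall_forall _ _) HG I HI). Qed.

Lemma from_pieces_cforms G A : from_pieces G -> In A (cforms G) -> In A (pieces E).
Proof.
  intros HG HA; apply in_flat_map in HA as (I & HI & HAI).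
  eapply Forall_forall in HG as [Hf _]; [eapply Forall_forall in Hf|]; eauto.
Qed.

Lemma from_pieces_csubs G V : from_pieces G -> In V (csubs G) -> is_Vx E V.
Proof.
  intros HG HV; apply in_flat_map in HV as (I & HI & HVI).
  eapply Forall_forall in HG as [_ Hs]; [eapply Forall_forall in Hs|]; eauto.
Qed.

Scheme iequiv_mut := Induction for iequiv Sort Prop
with cequiv_mut := Induction for cequiv Sort Prop.

Lemma from_pieces_cequiv G H : cequiv G H -> from_pieces G <-> from_pieces H.
Proof.
  revert G H.
  apply (cequiv_mut (fun I J _ => item_from_pieces I <-> item_from_pieces J)
                    (fun G H _ => from_pieces G <-> from_pieces H));
    unfold from_pieces in *.
  - reflexivity.
  - intros V W G H HVW _ IH; rewrite !item_from_pieces_IB, IH.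
    split; intros [HV HH]; split; auto; eapply is_Vx_set_eq; eauto.
    intro y; symmetry; apply HVW.
  - reflexivity.
  - intros I J G H _ IHI _ IHG; now rewrite !Forall_cons_iff, IHI, IHG.
  - intros I J G; rewrite !Forall_cons_iff; tauto.
  - intros G H K _ IH1 _ IH2; now rewrite IH1.
Qed.

Lemma from_pieces_clean_step G H : clean_step G H -> from_pieces G -> from_pieces H.
Proof.
  unfold from_pieces; induction 1; rewrite !Forall_app, !Forall_cons_iff,
    ?item_from_pieces_IB; unfold from_pieces; rewrite ?Forall_app, ?Forall_cons_iff;
    tauto.
Qed.

Lemma from_pieces_clean_star G H : clean_star G H -> from_pieces G -> from_pieces H.
Proof.
  induction 1 as [G|G H K Heq _ IH|G H K Hst _ IH]; auto.
  - now rewrite (from_pieces_cequiv _ _ Heq).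
  - eauto using from_pieces_clean_step.
Qed.

Lemma from_pieces_nest layers inner : from_pieces (nest layers inner) ->
  from_pieces inner /\ Forall (fun GV => from_pieces (fst GV) /\ is_Vx E (snd GV)) layers.
Proof.
  induction layers as [|[G V] layers IH]; simpl.
  { intros Hinner; split; [exact Hinner|constructor]. }
  intros Hnest; apply Forall_app in Hnest as [HG Hin].
  apply Forall_cons_iff, proj1, item_from_pieces_IB in Hin as [HV Hin].
  destruct (IH Hin) as [Hinner Hlayers]; split; [exact Hinner|constructor; auto].
Qed.

Lemma from_pieces_unnest layers :
  Forall (fun GV => from_pieces (fst GV) /\ is_Vx E (snd GV)) layers ->
  from_pieces (unnest layers).
Proof.
  unfold unnest; assert (Hnil : from_pieces []) by constructor; revert Hnil.
  generalize (@nil item) at 1 3 as acc.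
  induction layers as [|[G V] layers IH]; simpl; intros acc Hacc Hl; auto.
  apply Forall_cons_iff in Hl as [[HG HV] Hl]; simpl in HG, HV.
  apply IH; auto; constructor; [|constructor].
  apply item_from_pieces_IB; split; auto; now apply Forall_app.
Qed.

Definition seq_from_pieces (s : sequent) : Prop :=
  from_pieces (fst s) /\ In (snd s) (pieces E).

Lemma rule_inst_from_pieces nf ps s : strategy nf -> rule_inst nf ps s ->
  seq_from_pieces s -> Forall seq_from_pieces ps.
Proof.
  intros Hnf Hr [HG HA]; destruct Hr as
    [G layers Gi As p ts ps _ HGeq _ Hps|G x A G' _ HG'|G A B G' _ HG']; simpl in *.
  - rewrite (from_pieces_cequiv _ _ HGeq) in HG.
    apply from_pieces_nest in HG as [Hinner Hlayers].
    refine (Forall2_Forall _ _ (fun A => In A (pieces E)) _ _ _ Hps _).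
    + intros s' A' [Hs HsA] HA'; split; [|now rewrite HsA].
      rewrite (from_pieces_cequiv _ _ Hs).
      apply (from_pieces_clean_star _ _ (proj1 (Hnf _))), Forall_app.
      split; [apply from_pieces_unnest, Hlayers|exact Hinner].
    + apply Forall_app, proj2, Forall_cons_iff, proj1, item_from_pieces_IF in Hinner.
      apply Forall_forall; intros A' HA'.
      eapply pieces_trans; [apply pieces_imps, HA'|exact Hinner].
  - constructor; [|constructor]; split; simpl.
    + rewrite (from_pieces_cequiv _ _ HG').
      apply (from_pieces_clean_star _ _ (proj1 (Hnf _))).
      constructor; [|constructor]; apply item_from_pieces_IB; split; auto.
      exists x, A; split; [exact HA|intro y; reflexivity].
    + eapply pieces_trans; [apply pieces_All_body|exact HA].
  - constructor; [|constructor]; split; simpl.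
    + rewrite (from_pieces_cequiv _ _ HG').
      apply (from_pieces_clean_star _ _ (proj1 (Hnf _))), Forall_app; split; auto.
      constructor; [|constructor]; apply item_from_pieces_IF.
      eapply pieces_trans; [apply pieces_Imp_l|exact HA].
    + eapply pieces_trans; [apply pieces_Imp_r|exact HA].
Qed.

End FromPieces.

Lemma subtree_trans u v w : subtree u v -> subtree v w -> subtree u w.
Proof. intros Huv Hvw; induction Hvw; eauto using subtree. Qed.

Lemma valid_subtree nf u t : valid nf t -> subtree u t -> valid nf u.
Proof. intros Ht Hut s ch Hs; eauto using subtree_trans. Qed.

Lemma valid_inv nf (P : sequent -> Prop) t :
  (forall ps s, rule_inst nf ps s -> P s -> Forall P ps) ->
  valid nf t -> P (root t) -> forall u, subtree u t -> P (root u).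
Proof.
  intros Hrule Ht Hroot u Hut; induction Hut as [t|u s ch c Hc Huc IH]; auto.
  apply IH; [eauto using valid_subtree, subtree|].
  specialize (Hrule _ _ (Ht s ch (sub_refl _)) Hroot).
  now apply (proj1 (Forall_forall _ _) Hrule), in_map.
Qed.

Lemma occurs_applicable nf s t : valid nf t -> occurs s t -> applicable (fst s).
Proof. intros Ht [ch Hs]; destruct (Ht s ch Hs); assumption. Qed.

Section Depth.
Variable E : formula.
Hypothesis E_closed : closed E.
Hypothesis E_bv_NoDup : NoDup (bv E).

Definition item_below (F : formula) (I : item) : Prop :=
  Forall (fun A => In A (pieces F)) (iforms I) /\ idepth I <= qdepth F.

Lemma item_below_pieces F F' I : item_below F I -> In F (pieces F') -> item_below F' I.
Proof.
  intros [Hf Hd] HF; split.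
  - eapply Forall_impl; [|exact Hf]; intros A HA; exact (pieces_trans _ _ _ HA HF).
  - apply qdepth_pieces in HF; lia.
Qed.

(* The witness for a bracket [H]_V(x) is the piece forall x B of E. *)
Lemma normal_item_below I : forall G, normal G -> from_pieces E G -> In I G ->
  exists F, In F (pieces E) /\ item_below F I /\ (forall v, ifv I v -> In v (fv F)).
Proof.
  induction I as [B|V H IH] using item_ind_in; intros G Hn HG HI.
  - apply (from_pieces_in _ _ _ HG), item_from_pieces_IF in HI as HB.
    exists B; split; [exact HB|split; [split|]].
    + constructor; [apply pieces_refl|constructor].
    + apply le_0_n.
    + intros v Hv; exact Hv.
  - destruct (normal_IB G V H Hn HI) as [HnH Hscope].
    apply (from_pieces_in _ _ _ HG), item_from_pieces_IB in HI as [(x & B & HxB & HV) HH].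
    assert (HHB : forall J, In J H -> item_below B J).
    { intros J HJ.
      destruct (IH J HJ H HnH HH HJ) as (F & HF & HJF & HfvF).
      destruct (Hscope J HJ) as (v & HvJ & HvV).
      eapply item_below_pieces; [exact HJF|].
      apply (pieces_below_binder E x B F v); auto.
      now apply HV. }
    exists (All x B); split; [exact HxB|split; [split|]].
    + apply Forall_flat_map, Forall_forall; intros J HJ.
      eapply Forall_impl; [|apply (HHB J HJ)].
      intros A HA; eapply pieces_trans; [exact HA|apply pieces_All_body].
    + rewrite idepth_IB; simpl; apply le_n_S, cdepth_le; intros J HJ; apply HHB, HJ.
    + intros v Hv; apply ifv_IB_inv in Hv as [(J & HJ & HvJ) HvV].
      destruct (ifv_iforms J v HvJ) as (A & HA & HvA).
      apply fv_pieces_unbound with (B := A); auto.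
      * eapply Forall_forall in HA; [|apply (HHB J HJ)].
        eapply pieces_trans; [exact HA|apply pieces_All_body].
      * now rewrite <- (HV v).
Qed.

Lemma cdepth_normal G : normal G -> from_pieces E G -> cdepth G <= qdepth E.
Proof.
  intros Hn HG; apply cdepth_le; intros I HI.
  destruct (normal_item_below I G Hn HG HI) as (F & HF & [_ HIF] & _).
  apply qdepth_pieces in HF; lia.
Qed.

End Depth.

Theorem proposition13 (E : formula) (nf : ctx -> ctx) :
  closed E -> NoDup (bv E) -> strategy nf ->
  forall t : tree, valid nf t -> root t = ([], E) ->
  forall s : sequent, occurs s t -> inT E s.
Proof.
  intros HE Hnd Hnf t Ht Hroot s Hs.
  assert (Hsp : seq_from_pieces E s).
  { destruct Hs as [ch Hs].
    apply (valid_inv nf (seq_from_pieces E) t) with (u := Node s ch); auto.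
    - intros ps s'; apply rule_inst_from_pieces, Hnf.
    - rewrite Hroot; split; [constructor|apply pieces_refl]. }
  destruct Hsp as [HG HA]; destruct (occurs_applicable nf s t Ht Hs) as [Hn _].
  split; [|split].
  - intros A [HAG| ->]; [eapply from_pieces_cforms; eauto|exact HA].
  - intros V HV; eapply from_pieces_csubs; eauto.
  - now apply cdepth_normal.
Qed.
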